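(* Let $H$ be a finite simple graph with $n=|V(H)|$ vertices, let the vertex set of $H$ be partitioned into anticliques, and let $m'_A$ denote the number of non-edges of $H$ lying inside these anticliques (i.e. pairs of distinct vertices belonging to the same anticlique of the partition). If $m'$ is the number of all non-edges of $H$, then $$n + m'_A \leq \rho(H) \leq n+m'.$$
   Context: All graphs are finite and simple. A coloring means a proper vertex coloring; an induced subgraph is rainbow if all its vertices have pairwise different colors. For a graph $H$, $\rho(H)$ is the least number $m$ such that there exists a graph $G$ on $m$ vertices such that every proper vertex coloring of $G$ contains a rainbow induced subgraph isomorphic to $H$. An anticlique is a set of pairwise non-adjacent vertices; a non-edge is an unordered pair of distinct non-adjacent vertices. *)

From mathcomp Require Import all_boot.
Set Implicit Arguments. Unset Strict Implicit. Unset Printing Implicit Defensive.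

Definition simple_graph (V : finType) (e : rel V) : Prop :=
  symmetric e /\ irreflexive e.

Definition proper_coloring (V : finType) (e : rel V) (c : V -> nat) : Prop :=
  forall x y, e x y -> c x != c y.

Definition rainbow_induced_copy (T V : finType) (eH : rel T) (eG : rel V)
    (c : V -> nat) (f : T -> V) : Prop :=
  injective f /\ (forall x y, eG (f x) (f y) = eH x y) /\ injective (c \o f).

(* There is a graph G on m vertices such that every proper colouring of G
   contains a rainbow induced subgraph isomorphic to H. rho(H) is the least
   such m. *)
Definition rho_witness (T : finType) (eH : rel T) (m : nat) : Prop :=
  exists eG : rel 'I_m, simple_graph eG /\
    forall c : 'I_m -> nat, proper_coloring eG c ->
      exists f : T -> 'I_m, rainbow_induced_copy eH eG c f.

Definition anticlique (T : finType) (e : rel T) (A : {set T}) : bool :=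
  [forall x in A, forall y in A, ~~ e x y].

Definition num_nonedges (T : finType) (e : rel T) : nat :=
  #|[set S : {set T} | (#|S| == 2) && anticlique e S]|.

Definition num_nonedges_in (T : finType) (P : {set {set T}}) : nat :=
  #|[set S : {set T} | (#|S| == 2) && [exists B in P, S \subset B]]|.

(* Lower bound: colour G by repeatedly splitting off a maximum anticlique I of
   the remaining vertices as a new colour class.  A rainbow induced copy f of
   H[S] meets I in at most one vertex f w, and f maps the block B of w onto an
   anticlique of G, so |B :&: S| <= |I|.  Removing I and w therefore lowers
   |U| by |I| and |S| + #(block pairs inside S) by at most |I|, and induction
   shows that no rainbow copy of H[S] fits into fewer than
   |S| + #(block pairs inside S) vertices.

   Upper bound: order V(H) and blow each vertex v up into a clique of
   1 + k(v) clones, k(v) being the number of earlier non-neighbours of v,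
   clones of distinct u, v being adjacent iff uv is an edge.  Given a proper
   colouring, pick clones greedily along the order, each avoiding the colours
   of the clones picked for its k(v) earlier non-neighbours; the picked clones
   induce a rainbow copy of H, and the blow-up has n + m' vertices. *)

From mathcomp Require Import all_boot zify.

Set Implicit Arguments.
Unset Strict Implicit.
Unset Printing Implicit Defensive.

Section Anticliques.
Variables (V : finType) (e : rel V).

Lemma anticliqueS (A B : {set V}) : A \subset B -> anticlique e B -> anticlique e A.
Proof.
move=> /subsetP AB /forall_inP Banti; apply/forall_inP => x /AB xB.
by apply/forall_inP => y /AB yB; move/forall_inP: (Banti x xB); apply.
Qed.

Lemma anticlique1 (x : V) : irreflexive e -> anticlique e [set x].
Proof.
move=> eirr; apply/forall_inP => a /set1P ->.
by apply/forall_inP => b /set1P ->; rewrite eirr.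
Qed.

Lemma anticlique_image (W : finType) (eW : rel W) (f : W -> V) (A : {set W}) :
  {in A &, forall x y, e (f x) (f y) = eW x y} ->
  anticlique eW A -> anticlique e (f @: A).
Proof.
move=> fE /forall_inP Aanti; apply/forall_inP => _ /imsetP [x xA ->].
apply/forall_inP => _ /imsetP [y yA ->]; rewrite fE //.
by move/forall_inP: (Aanti x xA); apply.
Qed.

Lemma max_anticlique (U : {set V}) :
  exists2 I : {set V}, (I \subset U) && anticlique e I &
    forall J : {set V}, J \subset U -> anticlique e J -> #|J| <= #|I|.
Proof.
have set0_anti : (set0 \subset U) && anticlique e set0.
  by rewrite sub0set; apply/forall_inP => x; rewrite inE.
case: (arg_maxnP (P := fun J : {set V} => (J \subset U) && anticlique e J)
  (fun J : {set V} => #|J|) set0_anti) => I I_anti I_max.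
by exists I => // J JU J_anti; apply: I_max; rewrite JU.
Qed.

End Anticliques.

Lemma exists_avoid_seq (n : nat) (g : 'I_n.+1 -> nat) (s : seq nat) :
  injective g -> size s <= n -> exists j, g j \notin s.
Proof.
move=> g_inj size_s; apply/existsP; rewrite -negb_forall; apply/negP.
move=> /forallP g_in_s.
have : size (map g (enum 'I_n.+1)) <= size s.
  apply: uniq_leq_size; first by rewrite map_inj_uniq ?enum_uniq.
  by move=> _ /mapP [j _ ->]; rewrite g_in_s.
by rewrite size_map size_enum_ord; lia.
Qed.

Section LowerBound.
Variables (T : finType) (eH : rel T) (P : {set {set T}}).
Hypothesis P_partition : partition P [set: T].
Hypothesis P_anticlique : forall B, B \in P -> anticlique eH B.

Definition block_pairs (S : {set T}) : {set {set T}} :=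
  [set X : {set T} | [&& #|X| == 2, X \subset S & [exists B in P, X \subset B]]].

Lemma card_block_pairsT : #|block_pairs [set: T]| = num_nonedges_in P.
Proof. by apply: eq_card => X; rewrite !inE subsetT. Qed.

Lemma block_pairs0 : block_pairs set0 = set0.
Proof.
apply/setP => X; rewrite !inE subset0.
by apply/and3P => [[/eqP X2 /eqP X0 _]]; rewrite X0 cards0 in X2.
Qed.

Let P_triv : trivIset P. Proof. by case/and3P: P_partition. Qed.
Let P_cover (x : T) : x \in cover P.
Proof. by case/and3P: P_partition => /eqP ->; rewrite inE. Qed.

Lemma card_block_pairsD1 (S : {set T}) (w : T) : w \in S ->
  #|block_pairs S| <= #|block_pairs (S :\ w)| + #|(pblock P w :&: S) :\ w|.
Proof.
move=> wS; set B := pblock P w; set D := (B :&: S) :\ w.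
have pairs_through_w : forall X : {set T}, #|X| == 2 -> w \in X ->
    X \subset S -> X \subset B -> X \in [set [set w; y] | y in D].
  move=> X /cards2P [a [b [ab Xab]]] wX XS XB; apply/imsetP.
  have [y [yw Xwy]] : exists y, y != w /\ X = [set w; y].
    move: wX; rewrite Xab !inE => /orP [] /eqP ->.
      by exists b; rewrite eq_sym ab.
    by exists a; rewrite setUC.
  have yX : y \in X by rewrite Xwy !inE eqxx orbT.
  by exists y; rewrite // !inE yw (subsetP XB _ yX) (subsetP XS _ yX).
have cover_pairs :
    block_pairs S \subset block_pairs (S :\ w) :|: [set [set w; y] | y in D].
  apply/subsetP => X; rewrite !inE => /and3P [X2 XS /exists_inP [B' B'P XB']].
  have [wX|wX] := boolP (w \in X); last first.
    by rewrite X2 subsetD1 XS wX; apply/orP; left; apply/exists_inP; exists B'.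
  have B'B : B' = B by rewrite /B (def_pblock P_triv B'P (subsetP XB' w wX)).
  by apply/orP; right; apply: pairs_through_w; rewrite // -B'B.
apply: leq_trans (subset_leq_card cover_pairs) _.
by rewrite cardsU (leq_trans (leq_subr _ _)) // leq_add2l leq_imset_card.
Qed.

Variables (V : finType) (eG : rel V).
Hypothesis eG_irr : irreflexive eG.

Definition rainbow_copy_in (c : V -> nat) (U : {set V}) (S : {set T}) (f : T -> V) :=
  [/\ {in S, forall x, f x \in U}, {in S &, forall x y, eG (f x) (f y) = eH x y}
   & {in S &, injective (c \o f)}].

Lemma rainbow_meets_class_once (c : V -> nat) (I : {set V}) (S : {set T})
    (f : T -> V) (x0 : T) :
  x0 \in S -> {in S &, injective (c \o f)} -> {in I &, forall a b, c a = c b} ->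
  exists2 w, w \in S & {in S, forall x, f x \in I -> x = w}.
Proof.
move=> x0S c_inj c_const.
case: (pickP [pred x in S | f x \in I]) => [w /andP [wS wI] | noneI].
  by exists w => // x xS xI; apply: c_inj => //=; apply: c_const.
by exists x0 => // x xS xI; have := noneI x; rewrite /= xS xI.
Qed.

Lemma card_block_le_anticlique (c : V -> nat) (U I : {set V}) (S : {set T})
    (f : T -> V) (w : T) :
  rainbow_copy_in c U S f ->
  (forall J : {set V}, J \subset U -> anticlique eG J -> #|J| <= #|I|) ->
  #|pblock P w :&: S| <= #|I|.
Proof.
move=> [fU fE c_inj] I_max; set B := pblock P w.
have f_inj : {in B :&: S &, injective f}.
  by move=> x y /setIP [_ xS] /setIP [_ yS] fxy; apply: c_inj => //=; rewrite fxy.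
rewrite -(card_in_imset f_inj); apply: I_max.
  by apply/subsetP => _ /imsetP [x /setIP [_ xS] ->]; apply: fU.
apply: anticlique_image.
  by move=> x y /setIP [_ xS] /setIP [_ yS]; apply: fE.
by apply: (anticliqueS (subsetIl B S)); apply: P_anticlique; apply: pblock_mem.
Qed.

Definition add_color_class (I : {set V}) (c : V -> nat) (x : V) : nat :=
  if x \in I then 0 else (c x).+1.

Lemma rainbow_copy_in_setD (c : V -> nat) (U I : {set V}) (S : {set T})
    (f : T -> V) (w : T) :
  rainbow_copy_in (add_color_class I c) U S f ->
  {in S, forall x, f x \in I -> x = w} ->
  rainbow_copy_in c (U :\: I) (S :\ w) f.
Proof.
move=> [fU fE c_inj] I_once.
have fNI : {in S :\ w, forall x, f x \notin I}.
  move=> x /setD1P [xw xS]; apply: contra xw => /(I_once x xS) ->; exact: eqxx.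
split.
- by move=> x xSw; rewrite inE fNI // fU //; case/setD1P: xSw.
- by move=> x y /setD1P [_ xS] /setD1P [_ yS]; apply: fE.
move=> x y xSw ySw /= cxy; have /setD1P [_ xS] := xSw; have /setD1P [_ yS] := ySw.
apply: c_inj => //=; rewrite /add_color_class.
by rewrite (negbTE (fNI x xSw)) (negbTE (fNI y ySw)) cxy.
Qed.

Lemma exists_rainbow_free_coloring_in (U : {set V}) :
  exists c : V -> nat, {in U &, forall x y, eG x y -> c x != c y} /\
    forall (S : {set T}) f, #|U| < #|S| + #|block_pairs S| -> ~ rainbow_copy_in c U S f.
Proof.
elim: {U}#|U|.+1 {-2}U (ltnSn #|U|) => // n IH U Un.
have [-> | [u uU]] := set_0Vmem U.
  exists (fun _ => 0); split=> [x y|S f]; first by rewrite inE.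
  have [-> | [x xS]] := set_0Vmem S; first by rewrite block_pairs0 !cards0.
  by move=> _ [fU _ _]; have := fU x xS; rewrite inE.
have [I /andP [IU I_anti] I_max] := max_anticlique eG U.
have I_gt0 : 0 < #|I|.
  have u_sub : [set u] \subset U by rewrite sub1set.
  by have := I_max _ u_sub (anticlique1 u eG_irr); rewrite cards1.
have I_le_U := subset_leq_card IU.
have cardUI : #|U :\: I| = #|U| - #|I| by rewrite cardsD (setIidPr IU).
have [c' [c'_proper c'_no_copy]] : exists c' : V -> nat,
    {in U :\: I &, forall x y, eG x y -> c' x != c' y} /\
    forall (S : {set T}) f, #|U :\: I| < #|S| + #|block_pairs S| ->
      ~ rainbow_copy_in c' (U :\: I) S f.
  by apply: IH; lia.
exists (add_color_class I c'); split.
  move=> x y xU yU exy; rewrite /add_color_class.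
  case: ifPn => xI; case: ifPn => yI //.
    by move/forall_inP: I_anti => /(_ x xI) /forall_inP /(_ y yI); rewrite exy.
  by rewrite eqSS c'_proper // inE ?xI ?yI.
move=> S f S_large S_copy.
have [x0 x0S] : exists x0, x0 \in S.
  apply/set0Pn; apply: contraTneq S_large => ->.
  by rewrite block_pairs0 !cards0 -leqNgt.
have [w wS I_once] : exists2 w, w \in S & {in S, forall x, f x \in I -> x = w}.
  case: S_copy => _ _ c_inj; apply: rainbow_meets_class_once x0S c_inj _.
  by move=> a b aI bI; rewrite /add_color_class aI bI.
have block_le := card_block_le_anticlique w S_copy I_max.
have pairs_le := card_block_pairsD1 wS.
have cardBS : #|pblock P w :&: S| = 1 + #|(pblock P w :&: S) :\ w|.
  by rewrite (cardsD1 w) inE mem_pblock P_cover wS.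
have cardS : #|S| = 1 + #|S :\ w| by rewrite (cardsD1 w) wS.
apply: (c'_no_copy (S :\ w) f); last exact: rainbow_copy_in_setD S_copy I_once.
by rewrite cardUI; lia.
Qed.

End LowerBound.

Section UpperBound.
Variables (T : finType) (eH : rel T).
Hypothesis eH_sym : symmetric eH.
Hypothesis eH_irr : irreflexive eH.

Definition earlier_nonneighbours (v : T) : {set T} :=
  [set u | (enum_rank u < enum_rank v) && ~~ eH u v].

Definition blowup : finType := {v : T & 'I_#|earlier_nonneighbours v|.+1}.

Definition blowup_rel (x y : blowup) : bool :=
  (tag x == tag y) && (x != y) || eH (tag x) (tag y).

Lemma blowup_rel_sym : symmetric blowup_rel.
Proof. by move=> x y; rewrite /blowup_rel eq_sym eH_sym [y == x]eq_sym. Qed.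

Lemma blowup_rel_irr : irreflexive blowup_rel.
Proof. by move=> x; rewrite /blowup_rel !eqxx eH_irr. Qed.

Definition clone (v : T) (j : 'I_#|earlier_nonneighbours v|.+1) : blowup :=
  Tagged (fun v => 'I_#|earlier_nonneighbours v|.+1) j.
Arguments clone : clear implicits.

Lemma card_blowup :
  #|blowup| = #|T| + \sum_v #|earlier_nonneighbours v|.
Proof.
rewrite card_tagged sumnE big_map big_enum /=.
under eq_bigr do rewrite card_ord -addn1.
by rewrite big_split /= sum1_card addnC.
Qed.

Lemma sum_earlier_nonneighbours :
  \sum_v #|earlier_nonneighbours v| <= num_nonedges eH.
Proof.
set D := [set p : T * T | p.2 \in earlier_nonneighbours p.1].
have -> : \sum_v #|earlier_nonneighbours v| = #|D|.
  under eq_bigr do rewrite -sum1_card.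
  by rewrite pair_big_dep sum1dep_card.
have D_inj : {in D &, injective (fun p : T * T => [set p.1; p.2])}.
  move=> [a b] [a' b']; rewrite !inE /= => /andP [ba _] /andP [ba' _] eq2.
  have : b \in [set a'; b'] by rewrite -eq2 !inE eqxx orbT.
  have : a \in [set a'; b'] by rewrite -eq2 !inE eqxx.
  by rewrite !inE => /orP [] /eqP ? /orP [] /eqP ?; subst => //; lia.
rewrite -(card_in_imset D_inj); apply: subset_leq_card.
apply/subsetP => X /imsetP [[a b]]; rewrite !inE /= => /andP [ba nba] ->.
have ab : a != b by apply: contraTneq ba => ->; rewrite ltnn.
rewrite cards2 ab /=.
apply/forall_inP => x; rewrite !inE => /orP [] /eqP ->;
apply/forall_inP => y; rewrite !inE => /orP [] /eqP ->;
by rewrite ?eH_irr // eH_sym.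
Qed.

Section Greedy.
Variable c : blowup -> nat.
Hypothesis c_proper : forall x y, blowup_rel x y -> c x != c y.

Lemma clone_colors_inj (v : T) : injective (fun j => c (clone v j)).
Proof.
move=> j j' cjj'; apply/eqP/negPn/negP => jj'.
have adj : blowup_rel (clone v j) (clone v j').
  by rewrite /blowup_rel /= eqxx eq_Tagged jj'.
by have := c_proper adj; rewrite cjj' eqxx.
Qed.

Lemma greedy_prefix_section (i : nat) :
  exists f : T -> blowup, (forall v, tag (f v) = v) /\
    forall u v, enum_rank u < enum_rank v < i -> ~~ eH u v -> c (f u) != c (f v).
Proof.
elim: i => [|i [f [f_tag f_ok]]].
  by exists (fun v => clone v ord0); split=> // u v; rewrite ltn0 andbF.
have [i_lt | i_ge] := ltnP i #|T|; last first.
  exists f; split=> // u v /andP [uv _]; apply: f_ok; rewrite uv /=.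
  exact: leq_trans (ltn_ord _) i_ge.
pose v := enum_val (Ordinal i_lt).
have rank_v : enum_rank v = i :> nat by rewrite /v enum_valK.
pose used := [seq c (f u) | u <- enum (earlier_nonneighbours v)].
have size_used : size used <= #|earlier_nonneighbours v| by rewrite size_map -cardE.
have [j /= j_fresh] := exists_avoid_seq (@clone_colors_inj v) size_used.
exists (fun x => if x == v then clone v j else f x); split.
  by move=> x; case: eqP => [->|].
move=> u w /andP [uw w_le] nuw.
have /negPf -> : u != v by apply: contraTneq uw => ->; rewrite rank_v; lia.
have [wv | wv] := eqVneq w v.
  apply: contra j_fresh => /eqP <-; apply: map_f.
  by rewrite mem_enum inE -wv uw nuw.
apply: f_ok nuw; rewrite uw ltn_neqAle -ltnS w_le andbT -rank_v.
by apply: contra wv => /eqP/ord_inj/enum_rank_inj/eqP.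
Qed.

Lemma greedy_rainbow_section :
  exists f : T -> blowup, (forall v, tag (f v) = v) /\
    forall u v, u != v -> ~~ eH u v -> c (f u) != c (f v).
Proof.
have [f [f_tag f_ok]] := greedy_prefix_section #|T|.
exists f; split=> // u v uv nuv.
have rank_lt (x : T) : enum_rank x < #|T| by apply: ltn_ord.
have [lt_uv | lt_vu | eq_uv] := ltngtP (enum_rank u) (enum_rank v).
- by apply: f_ok nuv; rewrite lt_uv rank_lt.
- by rewrite eq_sym; apply: f_ok; rewrite ?lt_vu ?rank_lt // eH_sym.
- by move/ord_inj/enum_rank_inj: eq_uv uv => ->; rewrite eqxx.
Qed.

End Greedy.
End UpperBound.

Lemma rho_witness_card (T V : finType) (eH : rel T) (eG : rel V) :
  simple_graph eG ->
  (forall c : V -> nat, proper_coloring eG c ->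
     exists f : T -> V, rainbow_induced_copy eH eG c f) ->
  rho_witness eH #|V|.
Proof.
move=> [eG_sym eG_irr] G_rainbow.
exists (fun i j : 'I_#|V| => eG (enum_val i) (enum_val j)); split.
  by split=> [i j | i]; [apply: eG_sym | apply: eG_irr].
move=> c c_proper.
have [|f [f_inj [f_ind f_rainbow]]] := G_rainbow (fun x => c (enum_rank x)).
  by move=> x y exy; apply: c_proper; rewrite !enum_rankK.
exists (fun v => enum_rank (f v)); split; [|split].
- by move=> u v /enum_rank_inj/f_inj.
- by move=> u v; rewrite !enum_rankK.
- exact: f_rainbow.
Qed.

Lemma rho_witness_blowup (T : finType) (eH : rel T) :
  simple_graph eH -> rho_witness eH #|blowup eH|.
Proof.
move=> [eH_sym eH_irr]; apply: (rho_witness_card (eG := @blowup_rel T eH)).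
  by split; [apply: blowup_rel_sym | apply: blowup_rel_irr].
move=> c c_proper; have [f [f_tag f_ok]] := greedy_rainbow_section eH_sym c_proper.
have f_adj u v : blowup_rel (f u) (f v) = eH u v.
  rewrite /blowup_rel !f_tag; have [-> | //] := eqVneq u v.
  by rewrite eqxx eH_irr.
exists f; split; [|split] => //.
  by move=> u v fuv; rewrite -(f_tag u) fuv f_tag.
move=> u v /= cuv; apply/eqP/negPn/negP => uv; move/eqP: cuv; apply/negP.
have [euv | neuv] := boolP (eH u v); last exact: f_ok.
by apply: c_proper; rewrite f_adj.
Qed.

Lemma exists_rainbow_free_coloring (T V : finType) (eH : rel T)
    (P : {set {set T}}) (eG : rel V) :
  partition P [set: T] -> (forall B, B \in P -> anticlique eH B) ->
  irreflexive eG -> #|V| < #|T| + num_nonedges_in P ->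
  exists c : V -> nat, proper_coloring eG c /\ forall f, ~ rainbow_induced_copy eH eG c f.
Proof.
move=> P_part P_anti eG_irr V_small.
have [c [c_proper c_free]] :=
  exists_rainbow_free_coloring_in P_part P_anti eG_irr [set: V].
exists c; split=> [x y | f [_ [f_ind f_rainbow]]]; first exact: c_proper.
apply: (c_free [set: T] f).
  by rewrite card_block_pairsT !cardsT.
by split=> [x _ | x y _ _ | x y _ _]; rewrite ?inE ?f_ind //; apply: f_rainbow.
Qed.

Theorem corollary2p2 (T : finType) (eH : rel T) (P : {set {set T}}) :
  simple_graph eH ->
  partition P [set: T] ->
  (forall A, A \in P -> anticlique eH A) ->
  (forall m, rho_witness eH m -> #|T| + num_nonedges_in P <= m) /\
  (exists m, rho_witness eH m /\ m <= #|T| + num_nonedges eH).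
Proof.
move=> H_simple P_part P_anti; split.
  move=> m [eG [[_ eG_irr] G_rainbow]]; rewrite leqNgt; apply/negP => m_small.
  have G_small : #|'I_m| < #|T| + num_nonedges_in P by rewrite card_ord.
  have [c [c_proper c_free]] := exists_rainbow_free_coloring P_part P_anti eG_irr G_small.
  by have [f] := G_rainbow c c_proper; apply: c_free.
exists #|blowup eH|; split; first exact: rho_witness_blowup.
rewrite card_blowup leq_add2l.
by case: H_simple => eH_sym eH_irr; apply: sum_earlier_nonneighbours.
Qed.
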